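(* Let $(\boldsymbol{X},S,L,A,R)$ be as in the context, fix $l\in\mathcal{L}$ and $\epsilon\ge0$. For $\omega\in\mathbb{R}$ let $f^*_{l,\omega}$ be a decision function with $I\{f^*_{l,\omega}(\boldsymbol{Z})>0\}=I\{\delta_R(\boldsymbol{Z})-\omega I(L=l)\psi_l(S)>0\}$, and define $$G_l(\omega)=E\big[I(f^*_{l,\omega}(\boldsymbol{Z})>0)I(L=l)\psi_l(S)\big],\qquad V_l(\omega)=E\big[I(f^*_{l,\omega}(\boldsymbol{Z})>0)\delta_R(\boldsymbol{Z})\big].$$ Assume $G_l$ is continuous on $\mathbb{R}$ and conditions (C1) and (C4) below hold. Then: $G_l(\omega)$ is non-increasing in $\omega\in\mathbb{R}$; $V_l(\omega)$ is non-decreasing for $\omega\le0$ and non-increasing for $\omega>0$. Moreover, for a sufficiently large constant $K>0$: if $G_l(0)>\epsilon$, there exists $\omega^*_l\in(0,K)$ with $G_l(\omega^*_l)=\epsilon$; if $G_l(0)<-\epsilon$, there exists $\omega^*_l\in(-K,0)$ with $G_l(\omega^*_l)=-\epsilon$. (C1): $P(S=s\mid L=l)>c_0>0$ for all $s\in\{0,1\}$, $l\in\mathcal{L}$. (C4): the functions $f_0(\boldsymbol{z})=E(R\mid\boldsymbol{Z}=\boldsymbol{z},A=-1)$ and $f_1(\boldsymbol{z})=E(R\mid\boldsymbol{Z}=\boldsymbol{z},A=1)$ belong to the Hölder class $\mathcal{H}^\beta([0,1]^d,B_0)$ with $d=p+2$.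
   Context: $\boldsymbol{X}\in\mathbb{R}^p$ covariates, $S\in\{0,1\}$ sensitive attribute, $L$ categorical feature with finite range $\mathcal{L}$, $A\in\{1,-1\}$ treatment, $R$ outcome, $\boldsymbol{Z}=(\boldsymbol{X},S,L)$ (taking values in $[0,1]^d$, $d=p+2$, for (C4)). $\pi(s\mid l)=P(S=s\mid L=l)$, $\psi_l(S)=\frac{I(S=1)}{\pi(1\mid l)}-\frac{I(S=0)}{\pi(0\mid l)}$, $\delta_R(\boldsymbol{Z})=E[R\mid\boldsymbol{Z},A=1]-E[R\mid\boldsymbol{Z},A=-1]$. Hölder class: for $\beta=s+r$, $r\in(0,1]$, $s=\lfloor\beta\rfloor$ (largest integer strictly smaller than $\beta$), $\mathcal{H}^\beta([0,1]^d,B_0)$ is the set of $f:[0,1]^d\to\mathbb{R}$ with $\max_{\|\alpha\|_1\le s}\|\partial^\alpha f\|_\infty\le B_0$ and $\max_{\|\alpha\|_1=s}\sup_{x\ne y}|\partial^\alpha f(x)-\partial^\alpha f(y)|/\|x-y\|_2^r\le B_0$. *)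

From HB Require Import structures.
From mathcomp Require Import all_boot all_order all_algebra.
From mathcomp Require Import all_classical all_reals all_analysis.
Set Implicit Arguments. Unset Strict Implicit. Unset Printing Implicit Defensive.
Import Order.TTheory GRing.Theory Num.Theory.
Import numFieldNormedType.Exports.
Local Open Scope classical_set_scope.
Local Open Scope ring_scope.

Section Holder.
Variables (R : realType) (d : nat).

Definition evec (i : 'I_d) : 'rV[R]_d := delta_mx 0 i.

Definition dpart (i : 'I_d) (f : 'rV[R]_d -> R) : 'rV[R]_d -> R :=
  fun x => derive f x (evec i).

Definition dmulti (alpha : 'I_d -> nat) (f : 'rV[R]_d -> R) : 'rV[R]_d -> R :=
  foldr (fun i g => iter (alpha i) (dpart i) g) f (enum 'I_d).

Definition mabs (alpha : 'I_d -> nat) : nat := (\sum_(i < d) alpha i)%N.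

Definition enorm (x : 'rV[R]_d) : R := Num.sqrt (\sum_(i < d) (x 0 i) ^+ 2).

Definition closed_cube : set 'rV[R]_d := [set x | forall i, 0 <= x 0 i <= 1].
Definition open_cube : set 'rV[R]_d := [set x | forall i, 0 < x 0 i < 1].

(* f in H^beta([0,1]^d, B0), with beta = s + r, s integer, r in (0,1]
   (s = largest integer strictly smaller than beta).  Derivatives of order >= 1
   are taken at interior points of the cube. *)
Definition holder_class (beta B0 : R) (f : 'rV[R]_d -> R) : Prop :=
  exists s : nat, (s%:R < beta <= s.+1%:R) /\
   let r := beta - s%:R in
   let dom (k : nat) := if k == 0%N then closed_cube else open_cube in
   (forall alpha : 'I_d -> nat, (mabs alpha < s)%N ->
      forall (i : 'I_d) x, open_cube x -> derivable (dmulti alpha f) x (evec i)) /\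
   (forall alpha : 'I_d -> nat, (mabs alpha <= s)%N ->
      forall x, dom (mabs alpha) x -> `|dmulti alpha f x| <= B0) /\
   (forall alpha : 'I_d -> nat, mabs alpha = s ->
      forall x y, dom s x -> dom s y -> x != y ->
        `|dmulti alpha f x - dmulti alpha f y| / (enorm (x - y)) `^ r <= B0).

End Holder.

Section Setup.
Variables (dT : measure_display) (T : measurableType dT) (R : realType)
  (P : probability T R) (p : nat).

(* Z = (X, S, L) as a point of R^(p+2): coordinates 0..p-1 are X,
   coordinate p is S, coordinate p+1 is L. *)
Definition S_idx : 'I_(p.+2) := inord p.
Definition L_idx : 'I_(p.+2) := inord p.+1.
Definition Sz (z : 'rV[R]_(p.+2)) : R := z 0 S_idx.
Definition Lz (z : 'rV[R]_(p.+2)) : R := z 0 L_idx.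

Definition sigmaZ (Z : T -> 'rV[R]_(p.+2)) : set (set T) :=
  <<s [set E | exists (i : 'I_(p.+2)) (B : set R),
          measurable B /\ E = (fun w => Z w 0 i) @^-1` B] >>.

(* f is (a version of) z |-> E[Rv | Z = z, A = a] *)
Definition is_cond_exp (Z : T -> 'rV[R]_(p.+2)) (A Rv : T -> R) (a : R)
    (f : 'rV[R]_(p.+2) -> R) : Prop :=
  measurable_fun setT (f \o Z) /\
  forall E, sigmaZ Z E ->
    (\int[P]_(w in E `&` [set w | A w = a]) (Rv w)%:E =
     \int[P]_(w in E `&` [set w | A w = a]) (f (Z w))%:E)%E.

Definition ind (b : bool) : R := if b then 1 else 0.


Definition pi_cond (Z : T -> 'rV[R]_(p.+2)) (s l : R) : R :=
  fine (P [set w | Sz (Z w) = s /\ Lz (Z w) = l]) /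
  fine (P [set w | Lz (Z w) = l]).

Definition psi (Z : T -> 'rV[R]_(p.+2)) (l sv : R) : R :=
  ind (sv == 1) / pi_cond Z 1 l - ind (sv == 0) / pi_cond Z 0 l.

Definition Ex (X : T -> R) : R := fine ('E_P[X])%E.

End Setup.
Arguments ind {R} b.

From HB Require Import structures.
From mathcomp Require Import all_boot all_order all_algebra.
From mathcomp Require Import all_classical all_reals all_analysis.
From mathcomp Require Import lra measurable_realfun.
Import Order.TTheory GRing.Theory Num.Theory.
Import numFieldNormedType.Exports.
Local Open Scope classical_set_scope.
Local Open Scope ring_scope.

(* Write delta = f1 - f0 and c = I(L = l) psi_l(S), so that f*_{l,om} accepts
   exactly when delta > om c.  Raising om can only drop points with c > 0 and
   add points with c < 0, so the integrand of G_l decreases pointwise; the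
   integrand of V_l only changes where delta lies between the two thresholds,
   which forces the sign of delta there.  By (C1), c takes the values 0,
   1/pi(1|l) and -1/pi(0|l), and by (C4) delta is bounded, so for
   |om| >= sup|delta| / min|c| every point with c of the sign of om is
   rejected and G_l(om) has the sign opposite to om; the intermediate value
   theorem then yields omega*_l. *)

Section ThresholdPointwise.
Context {R : realType}.
Implicit Types (delta c om : R).

Lemma ind_threshold_weight_antitone delta c o1 o2 : o1 <= o2 ->
  ind (0 < delta - o2 * c) * c <= ind (0 < delta - o1 * c) * c.
Proof.
by move=> o12; rewrite /ind; case: ltrP => acc2; case: ltrP => acc1;
  rewrite ?mul1r ?mul0r //; nra.
Qed.

Lemma ind_threshold_gain_homo_nonpos delta c o1 o2 : o1 <= o2 -> o2 <= 0 ->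
  ind (0 < delta - o1 * c) * delta <= ind (0 < delta - o2 * c) * delta.
Proof.
move=> o12 o2_le0; rewrite /ind; case: ltrP => acc1; case: ltrP => acc2;
  rewrite ?mul1r ?mul0r //; by have [c_ge0|c_lt0] := lerP 0 c; nra.
Qed.

Lemma ind_threshold_gain_antitone_pos delta c o1 o2 : 0 < o1 -> o1 <= o2 ->
  ind (0 < delta - o2 * c) * delta <= ind (0 < delta - o1 * c) * delta.
Proof.
move=> o1_gt0 o12; rewrite /ind; case: ltrP => acc2; case: ltrP => acc1;
  rewrite ?mul1r ?mul0r //; by have [c_ge0|c_lt0] := lerP 0 c; nra.
Qed.

Lemma ind_threshold_weight_le0 delta c om : c <= 0 \/ delta <= om * c ->
  ind (0 < delta - om * c) * c <= 0.
Proof. by rewrite /ind; case: ltrP => acc; rewrite ?mul1r ?mul0r //; case=> //; lra. Qed.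

Lemma ind_threshold_weight_ge0 delta c om : 0 <= c \/ delta <= om * c ->
  0 <= ind (0 < delta - om * c) * c.
Proof. by rewrite /ind; case: ltrP => acc; rewrite ?mul1r ?mul0r //; case=> //; lra. Qed.

Lemma norm_ind_mul (b : bool) (x : R) : `|ind b * x| <= `|x|.
Proof. by case: b; rewrite /ind ?mul1r ?mul0r ?normr0. Qed.

End ThresholdPointwise.

Lemma IVT_rev {R : realType} {f : R -> R} {a b v : R} :
  a <= b -> continuous f -> f b <= v -> v <= f a ->
  exists2 x, x \in `[a, b] & f x = v.
Proof.
move=> ab cf fbv vfa; apply: IVT => //; first exact: continuous_subspaceT.
by rewrite ge_min le_max fbv vfa orbT.
Qed.

Lemma dmulti0 {R : realType} {n} (f : 'rV[R]_n -> R) :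
  dmulti (fun _ : 'I_n => 0%N) f = f.
Proof. by rewrite /dmulti; elim: (enum 'I_n) => //= i s ->. Qed.

Lemma holder_class_norm_le {R : realType} {n} {beta B0 : R} {f : 'rV[R]_n -> R}
    {x : 'rV[R]_n} :
  holder_class beta B0 f -> closed_cube x -> `|f x| <= B0.
Proof.
move=> [s [_ [_ [f_bd _]]]] cube_x.
have mabs0 : mabs (fun _ : 'I_n => 0%N) = 0%N by rewrite /mabs big1.
by have := f_bd (fun _ => 0%N); rewrite mabs0 dmulti0 /=; apply.
Qed.

Lemma holder_class_bound_ge0 {R : realType} {n} {beta B0 : R} {f : 'rV[R]_n -> R} :
  holder_class beta B0 f -> 0 <= B0.
Proof.
move=> holder_f; apply: le_trans (normr_ge0 (f 0)) (holder_class_norm_le holder_f _).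
by move=> i; rewrite mxE lexx ler01.
Qed.

Section Expectation.
Context {d : measure_display} {T : measurableType d} {R : realType}
  (P : probability T R).

Lemma integrable_bounded {f : T -> R} {M : R} : measurable_fun setT f ->
  (forall x, `|f x| <= M) -> P.-integrable setT (EFin \o f).
Proof.
move=> mf f_bd; apply: measurable_bounded_integrable => //.
  by rewrite (le_lt_trans (probability_le1 P measurableT)) ?ltry.
exists M; split; first exact: num_real.
by move=> y My x _; exact: le_trans (f_bd x) (ltW My).
Qed.

Lemma Ex_cst (r : R) : Ex P (cst r) = r.
Proof. by rewrite /Ex expectation_cst. Qed.

(* [Ex] is [fine] of an extended-real expectation: the bounds make both
   expectations finite, which is what makes it monotone. *)
Lemma Ex_le {X Y : T -> R} {MX MY : R} :
  measurable_fun setT X -> measurable_fun setT Y ->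
  (forall x, `|X x| <= MX) -> (forall x, `|Y x| <= MY) ->
  (forall x, X x <= Y x) -> Ex P X <= Ex P Y.
Proof.
move=> mX mY X_bd Y_bd XY; rewrite /Ex unlock.
have iX := integrable_bounded mX X_bd; have iY := integrable_bounded mY Y_bd.
apply: fine_le; [exact: integrable_fin_num iX|exact: integrable_fin_num iY|].
by apply: le_integral => // x _; rewrite lee_fin.
Qed.

Lemma measurable_ind (b : T -> bool) : measurable_fun setT b ->
  measurable_fun setT (fun w => ind (b w) : R).
Proof. by move=> mb; apply: measurable_fun_ifT. Qed.

Lemma measurable_ind_eq (g : T -> R) (r : R) : measurable_fun setT g ->
  measurable_fun setT (fun w => ind (g w == r) : R).
Proof.
by move=> mg; apply: measurable_ind; exact: measurable_fun_eqr mg (measurable_cst r).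
Qed.

End Expectation.

Section Psi.
Context {dT : measure_display} {T : measurableType dT} {R : realType}
  {P : probability T R} {p : nat} {Z : T -> 'rV[R]_p.+2} {l : R}.
Local Notation pi1 := (pi_cond P Z 1 l).
Local Notation pi0 := (pi_cond P Z 0 l).

Lemma psi1 : psi P Z l 1 = pi1^-1.
Proof. by rewrite /psi /ind eqxx oner_eq0 mul0r subr0 mul1r. Qed.

Lemma psi0 : psi P Z l 0 = - pi0^-1.
Proof. by rewrite /psi /ind eqxx eq_sym oner_eq0 mul0r sub0r mul1r. Qed.

Hypotheses (pi1_gt0 : 0 < pi1) (pi0_gt0 : 0 < pi0).

Lemma norm_ind_psi_le (b : bool) (s : R) : s = 0 \/ s = 1 ->
  `|ind b * psi P Z l s| <= pi1^-1 + pi0^-1.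
Proof.
move=> s01; apply: le_trans (norm_ind_mul _ _) _.
have [ipi1_gt0 ipi0_gt0] : 0 < pi1^-1 /\ 0 < pi0^-1 by rewrite !invr_gt0.
by case: s01 => ->; rewrite ?psi0 ?psi1 ?normrN gtr0_norm //; lra.
Qed.

Lemma norm_ind_psi_ge (b : bool) (s : R) : s = 0 \/ s = 1 ->
  ind b * psi P Z l s != 0 -> Num.min pi1^-1 pi0^-1 <= `|ind b * psi P Z l s|.
Proof.
case: b; rewrite /ind ?mul0r ?eqxx // mul1r => - [] -> _;
  by rewrite ?psi0 ?psi1 ?normrN gtr0_norm ?invr_gt0 // ge_min lexx ?orbT.
Qed.

End Psi.

Definition disparity {d : measure_display} {T : measurableType d} {R : realType}
    (P : probability T R) (delta c : T -> R) (om : R) : R :=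
  Ex P (fun w => ind (0 < delta w - om * c w) * c w).

Definition policy_value {d : measure_display} {T : measurableType d} {R : realType}
    (P : probability T R) (delta c : T -> R) (om : R) : R :=
  Ex P (fun w => ind (0 < delta w - om * c w) * delta w).

Section ThresholdPolicy.
Context {d : measure_display} {T : measurableType d} {R : realType}
  {P : probability T R} {delta c : T -> R} {Md Mc cmin : R}.
Hypotheses (mdelta : measurable_fun setT delta) (mc : measurable_fun setT c).
Hypotheses (delta_bd : forall w, `|delta w| <= Md) (c_bd : forall w, `|c w| <= Mc).
Hypotheses (cmin_gt0 : 0 < cmin) (c_away0 : forall w, c w != 0 -> cmin <= `|c w|).

Local Notation G := (disparity P delta c).
Local Notation V := (policy_value P delta c).

Let maccept om : measurable_fun setT (fun w => ind (0 < delta w - om * c w) : R).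
Proof.
apply: measurable_ind; apply: measurable_fun_ltr => //.
by apply: measurable_funB => //; exact: measurable_funM.
Qed.

Let mweight om :
  measurable_fun setT (fun w => ind (0 < delta w - om * c w) * c w).
Proof. exact: measurable_funM. Qed.

Let mgain om :
  measurable_fun setT (fun w => ind (0 < delta w - om * c w) * delta w).
Proof. exact: measurable_funM. Qed.

Let weight_bd om w : `|ind (0 < delta w - om * c w) * c w| <= Mc.
Proof. by apply: le_trans (c_bd w); exact: norm_ind_mul. Qed.

Let gain_bd om w : `|ind (0 < delta w - om * c w) * delta w| <= Md.
Proof. by apply: le_trans (delta_bd w); exact: norm_ind_mul. Qed.

Let cst0_bd (w : T) : `|cst (0 : R) w| <= 0.
Proof. by rewrite normr0. Qed.

Lemma disparity_antitone o1 o2 : o1 <= o2 -> G o2 <= G o1.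
Proof.
move=> o12; apply: (Ex_le P (mweight _) (mweight _) (weight_bd _) (weight_bd _)).
by move=> w; exact: ind_threshold_weight_antitone.
Qed.

Lemma policy_value_homo_nonpos o1 o2 : o1 <= o2 -> o2 <= 0 ->
  V o1 <= V o2.
Proof.
move=> o12 o2_le0; apply: (Ex_le P (mgain _) (mgain _) (gain_bd _) (gain_bd _)).
by move=> w; exact: ind_threshold_gain_homo_nonpos.
Qed.

Lemma policy_value_antitone_pos o1 o2 : 0 < o1 -> o1 <= o2 ->
  V o2 <= V o1.
Proof.
move=> o1_gt0 o12; apply: (Ex_le P (mgain _) (mgain _) (gain_bd _) (gain_bd _)).
by move=> w; exact: ind_threshold_gain_antitone_pos.
Qed.

Let delta_le_threshold om w : Md / cmin <= om -> cmin <= `|c w| ->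
  delta w <= om * `|c w|.
Proof.
move=> om_ge cmin_c; have Md_ge0 : 0 <= Md := le_trans (normr_ge0 _) (delta_bd w).
apply: le_trans (le_trans (ler_norm _) (delta_bd w)) _.
rewrite -[Md](divfK (lt0r_neq0 cmin_gt0)).
by apply: ler_pM; rewrite ?divr_ge0 ?(ltW cmin_gt0).
Qed.

Lemma disparity_le0 om : Md / cmin <= om -> G om <= 0.
Proof.
move=> om_ge; rewrite -(Ex_cst P 0).
apply: (Ex_le P (mweight _) (measurable_cst _) (weight_bd _) cst0_bd) => w.
apply: ind_threshold_weight_le0; have [c_le0|c_gt0] := lerP (c w) 0; first by left.
by right; rewrite -[c w]gtr0_norm //; apply/delta_le_threshold/c_away0/lt0r_neq0.
Qed.

Lemma disparity_ge0 om : Md / cmin <= om -> 0 <= G (- om).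
Proof.
move=> om_ge; rewrite -(Ex_cst P 0).
apply: (Ex_le P (measurable_cst _) (mweight _) cst0_bd (weight_bd _)) => w.
apply: ind_threshold_weight_ge0; have [c_ge0|c_lt0] := lerP 0 (c w); first by left.
right; rewrite mulNr -mulrN -[- c w]ltr0_norm //.
by apply/delta_le_threshold/c_away0/ltr0_neq0.
Qed.

Hypotheses (Md_ge0 : 0 <= Md) (G_cont : continuous G).

Lemma disparity_level_pos {eps : R} : 0 <= eps -> eps < G 0 ->
  exists2 om, 0 < om <= Md / cmin & G om = eps.
Proof.
move=> eps_ge0 eps_lt; have b_ge0 : 0 <= Md / cmin by rewrite divr_ge0 // ltW.
have [om] := IVT_rev b_ge0 G_cont
  (le_trans (disparity_le0 _ (lexx _)) eps_ge0) (ltW eps_lt).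
rewrite in_itv /= => /andP[om_ge0 om_le] G_om; exists om => //.
rewrite om_le andbT lt0r om_ge0 andbT; apply: contraTneq eps_lt => om0.
by rewrite -G_om om0 ltxx.
Qed.

Lemma disparity_level_neg {eps : R} : 0 <= eps -> G 0 < - eps ->
  exists2 om, - (Md / cmin) <= om < 0 & G om = - eps.
Proof.
move=> eps_ge0 lt_eps.
have nb_le0 : - (Md / cmin) <= 0 by rewrite oppr_le0 divr_ge0 // ltW.
have neps_le0 : - eps <= 0 by rewrite oppr_le0.
have [om] := IVT_rev nb_le0 G_cont (ltW lt_eps)
  (le_trans neps_le0 (disparity_ge0 _ (lexx _))).
rewrite in_itv /= => /andP[om_ge om_le0] G_om; exists om => //.
rewrite om_ge /= lt_neqAle om_le0 andbT; apply: contraTneq lt_eps => om0.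
by rewrite -G_om om0 ltxx.
Qed.

Lemma disparity_hits_levels {eps : R} : 0 <= eps ->
  exists K0 : R, 0 < K0 /\ forall K : R, K0 <= K ->
    (G 0 > eps -> exists om, 0 < om < K /\ G om = eps) /\
    (G 0 < - eps -> exists om, - K < om < 0 /\ G om = - eps).
Proof.
move=> eps_ge0; have b_ge0 : 0 <= Md / cmin by rewrite divr_ge0 // ltW.
exists (Md / cmin + 1); split=> [|K K_ge]; first lra.
split=> [G0_gt|G0_lt].
  have [om /andP[om_gt0 om_le] G_om] := disparity_level_pos eps_ge0 G0_gt.
  by exists om; split=> //; apply/andP; split=> //; lra.
have [om /andP[om_ge om_lt0] G_om] := disparity_level_neg eps_ge0 G0_lt.
by exists om; split=> //; apply/andP; split=> //; lra.
Qed.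

End ThresholdPolicy.

Theorem lemma1 (dT : measure_display) (T : measurableType dT) (R : realType)
  (P : probability T R) (p : nat)
  (Z : T -> 'rV[R]_(p.+2)) (A Rv : T -> R)
  (f0 f1 : 'rV[R]_(p.+2) -> R) (beta B0 : R)
  (fstar : R -> 'rV[R]_(p.+2) -> R) (l eps : R) :
  (* standing set-up *)
  (forall i : 'I_(p.+2), measurable_fun setT (fun w => Z w 0 i)) ->
  (forall w, closed_cube (Z w)) ->
  (forall w, Sz (Z w) = 0 \/ Sz (Z w) = 1) ->
  finite_set (range (fun w => Lz (Z w))) ->
  measurable_fun setT A -> (forall w, A w = 1 \/ A w = -1) ->
  measurable_fun setT Rv -> P.-integrable setT (fun w => (Rv w)%:E) ->
  is_cond_exp P Z A Rv (-1) f0 ->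
  is_cond_exp P Z A Rv 1 f1 ->
  (* l in the range of L, eps >= 0 *)
  range (fun w => Lz (Z w)) l -> 0 <= eps ->
  (* the decision functions f*_{l,omega} *)
  (forall (om : R) (z : 'rV[R]_(p.+2)),
     (0 < fstar om z) =
     (0 < (f1 z - f0 z) - om * ind (Lz z == l) * psi P Z l (Sz z))) ->
  (* G_l continuous *)
  continuous (fun om : R =>
     Ex P (fun w => ind (0 < fstar om (Z w)) * ind (Lz (Z w) == l)
                      * psi P Z l (Sz (Z w)))) ->
  (* (C1) *)
  (exists c0 : R, 0 < c0 /\
     forall s l', (s = 0 \/ s = 1) -> range (fun w => Lz (Z w)) l' ->
       c0 < pi_cond P Z s l') ->
  (* (C4) *)
  0 < beta ->
  holder_class beta B0 f0 -> holder_class beta B0 f1 ->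
  let G := fun om : R =>
     Ex P (fun w => ind (0 < fstar om (Z w)) * ind (Lz (Z w) == l)
                      * psi P Z l (Sz (Z w))) in
  let V := fun om : R =>
     Ex P (fun w => ind (0 < fstar om (Z w)) * (f1 (Z w) - f0 (Z w))) in
  (forall om1 om2 : R, om1 <= om2 -> G om2 <= G om1) /\
  (forall om1 om2 : R, om1 <= om2 -> om2 <= 0 -> V om1 <= V om2) /\
  (forall om1 om2 : R, 0 < om1 -> om1 <= om2 -> V om2 <= V om1) /\
  (exists K0 : R, 0 < K0 /\ forall K : R, K0 <= K ->
     (G 0 > eps -> exists om, 0 < om < K /\ G om = eps) /\
     (G 0 < - eps -> exists om, - K < om < 0 /\ G om = - eps)).
Proof.
move=> mZ Z_cube S01 _ _ _ _ _ cexp0 cexp1 l_range eps_ge0 fstarE G_cont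
  [c0 [c0_gt0 C1]] _ holder0 holder1 G V.
set pi1 := pi_cond P Z 1 l; set pi0 := pi_cond P Z 0 l.
have pi1_gt0 : 0 < pi1 by apply: lt_trans c0_gt0 (C1 1 l (or_intror erefl) l_range).
have pi0_gt0 : 0 < pi0 by apply: lt_trans c0_gt0 (C1 0 l (or_introl erefl) l_range).
pose delta w := f1 (Z w) - f0 (Z w).
pose c w := ind (Lz (Z w) == l) * psi P Z l (Sz (Z w)).
have mdelta : measurable_fun setT delta.
  by apply: measurable_funB; [case: cexp1|case: cexp0].
have mc : measurable_fun setT c.
  apply: measurable_funM; first exact: measurable_ind_eq (mZ _).
  apply: measurable_funB; apply: measurable_funM => //; exact: measurable_ind_eq (mZ _).
have delta_bd w : `|delta w| <= B0 + B0.
  apply: le_trans (ler_normB _ _) (lerD _ _).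
    exact: holder_class_norm_le holder1 (Z_cube w).
  exact: holder_class_norm_le holder0 (Z_cube w).
have c_bd w : `|c w| <= pi1^-1 + pi0^-1 := norm_ind_psi_le pi1_gt0 pi0_gt0 _ _ (S01 w).
have c_away0 w : c w != 0 -> Num.min pi1^-1 pi0^-1 <= `|c w| :=
  norm_ind_psi_ge pi1_gt0 pi0_gt0 _ _ (S01 w).
have cmin_gt0 : 0 < Num.min pi1^-1 pi0^-1.
  by rewrite lt_min !invr_gt0 pi1_gt0.
have acceptE om w : ind (0 < fstar om (Z w)) = ind (0 < delta w - om * c w) :> R.
  by rewrite fstarE mulrA.
have G_eq : G = disparity P delta c.
  by apply/funext => om; congr Ex; apply/funext => w; rewrite acceptE -mulrA.
have V_eq : V = policy_value P delta c.
  by apply/funext => om; congr Ex; apply/funext => w; rewrite acceptE.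
rewrite G_eq V_eq; split; first exact: disparity_antitone mdelta mc c_bd.
split; first exact: policy_value_homo_nonpos mdelta mc delta_bd.
split; first exact: policy_value_antitone_pos mdelta mc delta_bd.
have B0_ge0 : 0 <= B0 + B0 by rewrite addr_ge0 // (holder_class_bound_ge0 holder0).
have {}G_cont : continuous (disparity P delta c) by rewrite -G_eq.
exact: (disparity_hits_levels mdelta mc delta_bd c_bd cmin_gt0 c_away0 B0_ge0 G_cont
  eps_ge0).
Qed.
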